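(* Let $X$ be a nonempty set and $\rho:X\times X\to[0,\infty)$ satisfy: (I) $\rho(x,y)=0$ iff $x=y$; (II) $\rho(x,y)=\rho(y,x)$; (VI) for every $a\in X$ and $\varepsilon>0$ there exists $\phi(a,\varepsilon)>0$ such that for all $b,c\in X$, if $\rho(a,b)<\phi(a,\varepsilon)$ and $\rho(c,b)<\phi(a,\varepsilon)$ then $\rho(a,c)<\varepsilon$. Then $(X,\rho)$ is metrizable, i.e. there is a metric $d$ on $X$ such that for every sequence $\{x_n\}$ and $x\in X$, $\lim_n\rho(x_n,x)=0$ iff $\lim_n d(x_n,x)=0$.
   Context: Condition (VI) is equivalent to: (coherence) if $\lim_n\rho(a,a_n)=0$ and $\lim_n\rho(a_n,b_n)=0$ then $\lim_n\rho(a,b_n)=0$; and also to Wilson's condition: for each $a\in X$ and $k>0$ there is $r>0$ such that whenever $\rho(a,b)\ge k$ and $c\in X$ is arbitrary, $\rho(a,c)+\rho(b,c)\ge r$. *)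

From Stdlib Require Import Reals.
Open Scope R_scope.

Definition is_metric {X : Type} (d : X -> X -> R) : Prop :=
  (forall x y, 0 <= d x y) /\
  (forall x y, d x y = 0 <-> x = y) /\
  (forall x y, d x y = d y x) /\
  (forall x y z, d x z <= d x y + d y z).

Definition condVI {X : Type} (rho : X -> X -> R) : Prop :=
  forall (a : X) (eps : R), eps > 0 ->
    exists phi : R, phi > 0 /\
      forall b c : X, rho a b < phi -> rho c b < phi -> rho a c < eps.

(* Condition (VI) lets one choose radii r_n(a), tending to 0 uniformly in a,
   with r_(n+1)(a) <= phi(a, phi(a, r_n(a))).  Let E_n relate x and y when
   both lie in a common ball B(m, r_n(m)).  Of two balls of level n+1 meeting
   at y, the centre of the smaller one is within phi(m, r_n(m)) of the centre m
   of the larger one, so the smaller ball lies in B(m, r_n(m)): hence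
   E_(n+1) o E_(n+1) <= E_n, and the E_n are a countable base of a uniformity,
   which is metrizable.  The neighbourhoods E_n[x] of x are squeezed between
   rho-balls around x: B(x, r_n(x)) lies in E_n[x], and E_(n+1)[x] lies in
   B(x, e) as soon as 1/(n+2) <= phi(x, e). *)

From Stdlib Require Import Reals Lra Lia.
From HB Require Import structures.
From mathcomp Require Import ssreflect ssrfun ssrbool eqtype ssrnat choice.
From mathcomp Require Import ssralg ssrnum.
From mathcomp Require Import boolp classical_sets filter constructive_ereal.
From mathcomp Require Import reals.
From mathcomp Require Import topology normedtype Rstruct Rstruct_topology.

Set Implicit Arguments.
Unset Strict Implicit.
Unset Printing Implicit Defensive.

Open Scope classical_set_scope.
Open Scope R_scope.

Record coherent_semimetric (X : Type) := CoherentSemimetric {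
  sdist :> X -> X -> R;
  modulus : X -> R -> R;
  sdist_ge0 : forall x y, 0 <= sdist x y;
  sdist_eq0 : forall x y, sdist x y = 0 <-> x = y;
  sdist_sym : forall x y, sdist x y = sdist y x;
  modulus_gt0 : forall a e, 0 < e -> 0 < modulus a e;
  modulus_le : forall a e, modulus a e <= e;
  modulusP : forall a e b c, 0 < e ->
    sdist a b < modulus a e -> sdist c b < modulus a e -> sdist a c < e }.

Section Entourages.
Variables (X : Type) (rho : coherent_semimetric X).

Local Notation phi := (modulus rho).

Lemma sdist_xx x : rho x x = 0.
Proof. exact/(sdist_eq0 rho). Qed.

Lemma modulus_chain a e y m z : 0 < e ->
  rho a y < phi a (phi a e) -> rho m y < phi a (phi a e) ->
  rho z m < phi a (phi a e) -> rho a z < e.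
Proof.
move=> e_gt0 ay my zm; have phi_gt0 := modulus_gt0 rho a e_gt0.
have am : rho a m < phi a e by exact: (modulusP phi_gt0 ay my).
apply: (modulusP e_gt0 am).
by apply: Rlt_le_trans zm _; apply: modulus_le.
Qed.

Fixpoint radius (n : nat) (a : X) : R :=
  if n is k.+1 then Rmin (/ INR k.+2) (phi a (phi a (radius k a))) else 1.

Lemma radius_gt0 n a : 0 < radius n a.
Proof.
elim: n => [|n IHn]; first exact: Rlt_0_1.
apply: Rmin_glb_lt; first by apply: Rinv_0_lt_compat; apply: lt_0_INR; lia.
by do 2 apply: modulus_gt0.
Qed.

Lemma radiusS_le_modulus n a : radius n.+1 a <= phi a (phi a (radius n a)).
Proof. exact: Rmin_r. Qed.

Lemma radiusS_le n a : radius n.+1 a <= radius n a.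
Proof.
apply: Rle_trans (radiusS_le_modulus n a) _.
by apply: Rle_trans (modulus_le _ _ _) _; apply: modulus_le.
Qed.

Lemma radiusS_le_inv n a : radius n.+1 a <= / INR n.+2.
Proof. exact: Rmin_l. Qed.

Definition ent (n : nat) (x y : X) : Prop :=
  exists m, rho m x < radius n m /\ rho m y < radius n m.

Lemma ent_center n x y : rho x y < radius n x -> ent n x y.
Proof. by exists x; rewrite sdist_xx; split => //; apply: radius_gt0. Qed.

Lemma ent_refl n x : ent n x x.
Proof. by apply: ent_center; rewrite sdist_xx; apply: radius_gt0. Qed.

Lemma ent_sym n x y : ent n x y -> ent n y x.
Proof. by move=> [m [mx my]]; exists m. Qed.

Lemma ent_split_le n m1 m2 x y z :
  radius n.+1 m2 <= radius n.+1 m1 ->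
  rho m1 x < radius n.+1 m1 -> rho m1 y < radius n.+1 m1 ->
  rho m2 y < radius n.+1 m2 -> rho m2 z < radius n.+1 m2 -> ent n x z.
Proof.
move=> r21 m1x m1y m2y m2z; have := radiusS_le_modulus n m1.
exists m1; split; first by have := radiusS_le n m1; lra.
apply: (modulus_chain (radius_gt0 n m1) (y := y) (m := m2)); try lra.
by rewrite sdist_sym; lra.
Qed.

Lemma ent_split n x y z : ent n.+1 x y -> ent n.+1 y z -> ent n x z.
Proof.
move=> [m1 [m1x m1y]] [m2 [m2y m2z]].
have [r21|r12] := Rle_lt_dec (radius n.+1 m2) (radius n.+1 m1).
  exact: (ent_split_le r21 m1x m1y m2y m2z).
apply/ent_sym/(ent_split_le (Rlt_le _ _ r12) m2z m2y m1y m1x).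
Qed.

Lemma ent_antitone n k x y : (n <= k)%N -> ent k x y -> ent n x y.
Proof.
elim: k => [|k IHk]; first by rewrite leqn0 => /eqP ->.
rewrite leq_eqVlt ltnS => /orP [/eqP -> //|nk] exy.
by apply: IHk nk _; apply: ent_split exy (ent_refl _ _).
Qed.

Lemma ent_sdist_lt x e : 0 < e -> exists n, forall y, ent n x y -> rho x y < e.
Proof.
move=> e_gt0; have phi_gt0 := modulus_gt0 rho x e_gt0.
have [N [invN N_gt0]] := archimed_cor1 _ phi_gt0.
exists N.+1 => y [m [mx my]].
have small : radius N.+1 m < phi x e.
  apply: Rle_lt_trans (radiusS_le_inv N m) _; apply: Rle_lt_trans invN.
  by apply: Rinv_le_contravar; [apply: lt_0_INR | apply: le_INR]; lia.
apply: (modulusP e_gt0 (b := m)); rewrite sdist_sym; lra.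
Qed.

Lemma ent_all_eq x y : (forall n, ent n x y) -> x = y.
Proof.
move=> xy; apply/(sdist_eq0 rho)/Rle_antisym; last exact: sdist_ge0.
apply: Rnot_lt_le => xy_gt0.
have [n /(_ y (xy n))] := ent_sdist_lt x xy_gt0; lra.
Qed.

End Entourages.

Lemma near_sdist_ent X (rho : coherent_semimetric X) I (F : set_system I)
    {FF : Filter F} (x : X) (f : I -> X) :
  (forall e, 0 < e -> \forall i \near F, rho (f i) x < e) <->
  (forall n, \forall i \near F, ent rho n x (f i)).
Proof.
split=> [near_rho n | near_ent e e_gt0].
  apply: filterS (near_rho _ (radius_gt0 rho n x)) => i.
  by rewrite sdist_sym; apply: ent_center.
have [n ent_lt] := ent_sdist_lt rho x e_gt0.
by apply: filterS (near_ent n) => i /ent_lt; rewrite sdist_sym.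
Qed.

Lemma Un_cv0_near (u : nat -> R) : (forall k, 0 <= u k) ->
  Un_cv u 0 <-> forall e, 0 < e -> \forall k \near \oo, u k < e.
Proof.
move=> u_ge0; split=> [cvu e e_gt0 | near_u e e_gt0].
  have [N uN] := cvu e e_gt0; exists N => // k /= /ssrnat.leP Nk.
  by have := uN k Nk; rewrite /R_dist Rminus_0_r Rabs_pos_eq.
have [N _ uN] := near_u e e_gt0; exists N => k /ssrnat.leP Nk.
by rewrite /R_dist Rminus_0_r Rabs_pos_eq //; apply: uN.
Qed.

Definition coherent_space (X : Type) (rho : coherent_semimetric X) : Type := X.

Section CoherentUniformity.
Variables (X : Type) (rho : coherent_semimetric X).
Local Notation T := (coherent_space rho).
Local Open Scope relation_scope.

HB.instance Definition _ := gen_eqMixin T.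
HB.instance Definition _ := gen_choiceMixin T.

Definition ent_set (n : nat) : set (T * T) := [set xy | ent rho n xy.1 xy.2].

Definition coherent_entourage : set_system (T * T) :=
  filter_from [set: nat] ent_set.

Lemma coherent_entourage_filter : Filter coherent_entourage.
Proof.
apply: filter_from_filter; first by exists 0%N.
move=> i j _ _; exists (maxn i j) => // xy exy.
by split; apply: ent_antitone exy; rewrite ?leq_maxl ?leq_maxr.
Qed.

Lemma coherent_entourage_diag A : coherent_entourage A -> diagonal `<=` A.
Proof.
by move=> [n _ entA] [x y]; rewrite /diagonal /= => <-; apply/entA/ent_refl.
Qed.

Lemma coherent_entourage_inv A :
  coherent_entourage A -> coherent_entourage A^-1.
Proof.
by move=> [n _ entA]; exists n => // [[x y]] xy; apply/(entA (y, x))/ent_sym.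
Qed.

Lemma coherent_entourage_split A : coherent_entourage A ->
  exists2 B, coherent_entourage B & B \; B `<=` A.
Proof.
move=> [n _ entA]; exists (ent_set n.+1); first by exists n.+1.
by move=> [x z] [y /= xy yz]; apply/entA/(ent_split xy yz).
Qed.

HB.instance Definition _ := isUniform.Build T coherent_entourage_filter
  coherent_entourage_diag coherent_entourage_inv coherent_entourage_split.

Lemma coherent_countable_uniformity : countable_uniformity T.
Proof.
by apply/countable_uniformityP; exists ent_set => [A [n]|n]; exists n.
Qed.

End CoherentUniformity.

Section BallDist.
Variable M : pseudoMetricType R.
Hypothesis ball_total : forall x y : M, exists2 e, 0 < e & ball x e y.

Definition ball_dist (x y : M) : R := fine (edist (x, y)).

Lemma edist_fin_num (x y : M) : (edist (x, y) \is a fin_num)%E.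
Proof.
by have [e /RltP e_gt0 xy] := ball_total x y; apply/edist_finP; exists e.
Qed.

Lemma ball_dist_ge0 x y : 0 <= ball_dist x y.
Proof. exact/RleP/fine_ge0/edist_ge0. Qed.

Lemma ball_dist_sym x y : ball_dist x y = ball_dist y x.
Proof. by rewrite /ball_dist edist_sym. Qed.

Lemma ball_dist_triangle x y z :
  ball_dist x z <= ball_dist x y + ball_dist y z.
Proof.
apply/RleP; rewrite RplusE /ball_dist -fineD ?edist_fin_num //.
by apply: fine_le; rewrite ?fin_numD ?edist_fin_num //; apply: edist_triangle.
Qed.

Lemma ball_dist_lt_ball x y e : ball_dist x y < e -> ball x e y.
Proof.
move=> /RltP xy; apply: (@edist_lt_ball _ _ e (x, y)).
by rewrite -(fineK (edist_fin_num x y)) lte_fin.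
Qed.

Lemma ball_dist_le x y e : 0 < e -> ball x e y -> ball_dist x y <= e.
Proof.
move=> /RltP e_gt0 xy; have := @edist_fin _ _ e (x, y) e_gt0 xy.
by rewrite -(fineK (edist_fin_num x y)) lee_fin => /RleP.
Qed.

Lemma ball_dist_metric :
  (forall x y : M, (forall e, 0 < e -> ball x e y) -> x = y) ->
  is_metric ball_dist.
Proof.
move=> separated; split; first exact: ball_dist_ge0.
split; last by split; [apply: ball_dist_sym | apply: ball_dist_triangle].
move=> x y; split=> [xy0 | <-].
  by apply: separated => e e_gt0; apply: ball_dist_lt_ball; lra.
apply: Rle_antisym; last exact: ball_dist_ge0.
apply: Rnot_lt_le => xx_gt0.
have half_gt0 : 0 < ball_dist x x / 2 by lra.
have := ball_dist_le half_gt0 (ballxx x (introT RltP half_gt0)); lra.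
Qed.

Lemma near_ball_dist I (F : set_system I) {FF : Filter F}
    (x : M) (f : I -> M) :
  (forall e, 0 < e -> \forall i \near F, ball_dist (f i) x < e) <->
  (forall e, 0 < e -> \forall i \near F, ball x e (f i)).
Proof.
split=> [near_dist e e_gt0 | near_ball e e_gt0].
  apply: filterS (near_dist e e_gt0) => i.
  by rewrite ball_dist_sym; apply: ball_dist_lt_ball.
have e2_gt0 : 0 < e / 2 by lra.
apply: filterS (near_ball _ e2_gt0) => i fi.
by rewrite ball_dist_sym; have := ball_dist_le e2_gt0 fi; lra.
Qed.

End BallDist.

Section CoherentMetric.
Variables (X : Type) (rho : coherent_semimetric X).
Local Notation M :=
  (countable_uniform.type (coherent_countable_uniformity rho)).

Lemma ball_ent n :
  exists2 e, 0 < e & forall x y : M, ball x e y -> ent rho n x y.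
Proof.
have : @entourage M (@ent_set _ rho n) by exists n.
rewrite -(@entourage_ballE R M) => -[e /RltP e_gt0 sub]; exists e => // x y xy.
exact: (sub (x, y)).
Qed.

Lemma ent_ball e :
  0 < e -> exists n, forall x y : M, ent rho n x y -> ball x e y.
Proof.
move=> /RltP e_gt0; have : @entourage M [set xy | ball xy.1 e xy.2].
  by rewrite -(@entourage_ballE R M); exists e.
by move=> [n _ sub]; exists n => x y xy; apply: (sub (x, y)).
Qed.

Lemma coherent_ball_total (x y : M) : exists2 e, 0 < e & ball x e y.
Proof.
by exists 2; [lra | apply: countable_uniform.countable_uniform_bounded].
Qed.

Lemma coherent_separated (x y : M) : (forall e, 0 < e -> ball x e y) -> x = y.
Proof.
move=> xy; apply: (@ent_all_eq _ rho x y) => n.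
by have [e e_gt0 /(_ x y)] := ball_ent n; apply; apply: xy.
Qed.

Lemma near_ball_ent I (F : set_system I) {FF : Filter F}
    (x : M) (f : I -> M) :
  (forall e, 0 < e -> \forall i \near F, ball x e (f i)) <->
  (forall n, \forall i \near F, ent rho n x (f i)).
Proof.
split=> [near_ball n | near_ent e /ent_ball [n ent_sub]].
  have [e e_gt0 ball_sub] := ball_ent n.
  by apply: filterS (near_ball e e_gt0) => i; apply: ball_sub.
by apply: filterS (near_ent n) => i; apply: ent_sub.
Qed.

End CoherentMetric.

Lemma condVI_coherent X (rho : X -> X -> R) :
  (forall x y, 0 <= rho x y) -> (forall x y, rho x y = 0 <-> x = y) ->
  (forall x y, rho x y = rho y x) -> condVI rho ->
  exists S : coherent_semimetric X, sdist S = rho.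
Proof.
move=> rho_ge0 rho_eq0 rho_sym rhoVI.
have /choice [phi phiP] : forall ae : X * R, exists p, 0 < ae.2 -> 0 < p /\
    forall b c, rho ae.1 b < p -> rho c b < p -> rho ae.1 c < ae.2.
  move=> [a e]; have [e_gt0|e_le0] := Rlt_le_dec 0 e.
    by have [p pP] := rhoVI a e e_gt0; exists p.
  by exists 1 => /= e_gt0; lra.
pose modulus a e := Rmin e (phi (a, e)).
have modulus_gt0 a e : 0 < e -> 0 < modulus a e.
  by move=> e_gt0; apply: Rmin_glb_lt => //; case: (phiP (a, e) e_gt0).
have modulusP a e b c : 0 < e ->
    rho a b < modulus a e -> rho c b < modulus a e -> rho a c < e.
  move=> e_gt0 ab cb; have [_ /= pP] := phiP (a, e) e_gt0.
  apply: pP; [apply: Rlt_le_trans ab _ | apply: Rlt_le_trans cb _];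
  exact: Rmin_r.
by exists (CoherentSemimetric rho_ge0 rho_eq0 rho_sym modulus_gt0
  (fun a e => Rmin_l _ _) modulusP).
Qed.

Theorem mainTheorem9 (X : Type) (x0 : X) (rho : X -> X -> R)
  (Hnn : forall x y, 0 <= rho x y)
  (HI : forall x y, rho x y = 0 <-> x = y)
  (HII : forall x y, rho x y = rho y x)
  (HVI : condVI rho) :
  exists d : X -> X -> R, is_metric d /\
    forall (s : nat -> X) (x : X),
      Un_cv (fun n => rho (s n) x) 0 <-> Un_cv (fun n => d (s n) x) 0.
Proof.
have [S <-] := condVI_coherent Hnn HI HII HVI.
pose M := countable_uniform.type (coherent_countable_uniformity S).
exists (@ball_dist M); split.
  exact: ball_dist_metric (@coherent_ball_total _ S) (@coherent_separated _ S).
move=> s x; rewrite !Un_cv0_near; last 2 first.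
- by move=> n; apply: ball_dist_ge0.
- by move=> n; apply: sdist_ge0.
rewrite near_sdist_ent (near_ball_dist (@coherent_ball_total _ S)).
by rewrite (near_ball_ent (rho := S)).
Qed.
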